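(* Every nonempty open subset $U\subset \mathbb{R}^{\mathbb{N}}$ satisfies $\mu(U)=\infty$.
   Context: $\mathbb{R}^{\mathbb{N}}$ carries the product topology. Let $\mathcal{B}$ be the Borel $\sigma$-algebra of $\mathbb{R}$, $\lambda$ the Lebesgue measure, and $\mathcal{B}_{\infty}$ the $\sigma$-algebra on $\mathbb{R}^{\mathbb{N}}$ generated by the cylinder sets $\prod_{i=1}^{m}C_{i}\times\prod_{i=m+1}^{\infty}\mathbb{R}$ with $C_i\in\mathcal{B}$, $m\in\mathbb{N}$ (equal to the Borel $\sigma$-algebra of the product topology). Let $\mathcal{F}(\mathcal{B},\lambda)$ be the set of finite rectangles $\prod_{i\in\mathbb{N}}C_{i}$ with $C_i\in\mathcal{B}$ and $\prod_{i}\lambda(C_i)\in[0,\infty)$, with $\mathrm{vol}(\prod_{i}C_i):=\prod_i\lambda(C_i)$. The measure $\mu$ is the restriction to $\mathcal{B}_{\infty}$ of the outer measure $\mu^{\ast}(A):=\inf\{\sum_{n}\mathrm{vol}(\mathscr{C}_{n}) : \mathscr{C}_{n}\in\mathcal{F}(\mathcal{B},\lambda),\ A\subset\bigcup_{n}\mathscr{C}_{n}\}$ ($\inf\varnothing=\infty$). *)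

From HB Require Import structures.
From mathcomp Require Import all_boot all_order all_algebra.
From mathcomp Require Import all_classical all_reals all_analysis.
Set Implicit Arguments. Unset Strict Implicit. Unset Printing Implicit Defensive.
Import Order.TTheory GRing.Theory Num.Theory.
Local Open Scope classical_set_scope.
Local Open Scope ring_scope.
Local Open Scope ereal_scope.

Section LebesgueRN.
Variable R : realType.

Definition lam : set R -> \bar R := (@lebesgue_measure R).

Definition rect (C : nat -> set R) : set (nat -> R) :=
  [set x | forall i, C i (x i)].

Definition pprod (C : nat -> set R) (n : nat) : \bar R :=
  \prod_(i < n) lam (C i).

Definition finite_rect (C : nat -> set R) : Prop :=
  (forall i, measurable (C i)) /\ exists r : R, pprod C @ \oo --> r%:E.

Definition vol (C : nat -> set R) : \bar R := lim (pprod C @ \oo).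

(* outer measure mu^* ; ereal_inf set0 = +oo *)
Definition mu_star (A : set (nat -> R)) : \bar R :=
  ereal_inf [set s | exists C : nat -> nat -> set R,
     (forall n, finite_rect (C n)) /\
     A `<=` \bigcup_n rect (C n) /\
     s = \sum_(0 <= n <oo) vol (C n)].

(* mu is the restriction of mu^* to B_infty; on B_infty it coincides with mu^* *)
Definition mu (A : set (nat -> R)) : \bar R := mu_star A.

End LebesgueRN.

(* A finite rectangle either has a Lebesgue-null side or, its volume being
   finite, infinitely many sides of finite measure.  Fix x0 and a basic
   neighbourhood constraining the first m coordinates.  Assign injectively to
   each rectangle n a coordinate k n >= m at which its side is finite, unless
   it has a null side.  In coordinate i, the union of all null sides with the
   side assigned to i has measure 0 if i < m and finite measure otherwise, so
   x i can be chosen outside of it, and close to x0 i when i < m.  Then x lies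
   in the neighbourhood but in none of the rectangles: no countable family of
   finite rectangles covers a nonempty open set, so mu U is the infimum of the
   empty set. *)

From HB Require Import structures.
From mathcomp Require Import all_boot all_order all_algebra.
From mathcomp Require Import all_classical all_reals all_analysis.
From mathcomp Require Import lra.
Set Implicit Arguments. Unset Strict Implicit. Unset Printing Implicit Defensive.
Import numFieldTopology.Exports.
Import Order.TTheory GRing.Theory Num.Theory.
Local Open Scope classical_set_scope.
Local Open Scope ring_scope.
Local Open Scope ereal_scope.

Lemma measure_bigcup_null d (T : measurableType d) (R : realType)
    (nu : {measure set T -> \bar R}) (P : set nat) (F : nat -> set T) :
  (forall n, P n -> measurable (F n)) -> (forall n, P n -> nu (F n) = 0) ->
  nu (\bigcup_(n in P) F n) = 0.
Proof.
move=> mF F0; apply/negligibleP; first exact: bigcup_measurable.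
rewrite bigcup_mkcond; apply: negligible_bigcup => n.
case: ifPn => [/set_mem Pn|_]; last exact: negligible_set0.
by apply/negligibleP; [exact: mF | exact: F0].
Qed.

Lemma measure_lt_setD_neq0 d (T : measurableType d) (R : realType)
    (nu : {measure set T -> \bar R}) (A B : set T) :
  measurable A -> measurable B -> nu A < nu B -> B `\` A !=set0.
Proof.
move=> mA mB; apply: contraPP => /set0P/negP/negPn/eqP.
by rewrite setD_eq0 => BA; apply/negP; rewrite -leNgt le_measure ?inE.
Qed.

Lemma lamT (R : realType) : lam [set: R] = +oo.
Proof. by rewrite /lam -set_itvNyy lebesgue_measure_itv. Qed.

Lemma eprod_cvgy (R : realType) (a : nat -> \bar R) (b : nat) :
  (forall i, 0 < a i) -> (forall i, (b <= i)%N -> a i = +oo) ->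
  \prod_(i < n) a i @[n --> \oo] --> +oo.
Proof.
move=> a_gt0 a_infty; apply: cvg_near_cst; exists b.+1 => // -[//|n] /= bn.
rewrite big_ord_recr /= a_infty // gt0_muley //.
by elim/big_ind: _ => // x y; exact: mule_gt0.
Qed.

Lemma finite_rect_null_or_finite (R : realType) (C : nat -> set R) :
  finite_rect C ->
  (exists j, lam (C j) = 0) \/ forall b, exists2 i, (b <= i)%N & lam (C i) < +oo.
Proof.
move=> [_ [r Cr]]; have [|C_neq0] := pselect (exists j, lam (C j) = 0).
  by left.
right=> b; apply: contrapT => C_infty.
have C_gt0 i : 0 < lam (C i).
  rewrite lt0e measure_ge0 andbT; apply/eqP => C0; apply: C_neq0; by exists i.
have C_eqy i : (b <= i)%N -> lam (C i) = +oo.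
  move=> bi; apply/eqP; rewrite eq_le leey /= leNgt; apply/negP => Cfin.
  by apply: C_infty; exists i.
have Cy : pprod C @ \oo --> +oo := eprod_cvgy C_gt0 C_eqy.
suff : r%:E = +oo by [].
by rewrite -(cvg_lim (@ereal_hausdorff R) Cr) (cvg_lim (@ereal_hausdorff R) Cy).
Qed.

Lemma increasing_choice (P : nat -> nat -> Prop) (m : nat) :
  (forall n b, exists2 i, (b <= i)%N & P n i) ->
  exists k : nat -> nat,
    [/\ {homo k : p q / (p < q)%N}, forall n, (m <= k n)%N & forall n, P n (k n)].
Proof.
move=> P_unbounded.
have /choice[g gP] (nb : nat * nat) : exists i, (nb.2 <= i)%N /\ P nb.1 i.
  by have [i] := P_unbounded nb.1 nb.2; exists i.
pose k := fix k n := if n is n'.+1 then g (n, (k n').+1) else g (0%N, m).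
have k_incr : {homo k : p q / (p < q)%N}.
  by apply: homo_ltn => [y x z|n]; [exact: ltn_trans | exact: (gP (n.+1, _)).1].
exists k; split=> // n; last first.
  by case: n => [|n]; [exact: (gP (0%N, m)).2 | exact: (gP (n.+1, (k n).+1)).2].
exact: leq_trans (gP (0%N, m)).1 (ltnW_homo k_incr (leq0n n)).
Qed.

Section forbidden_values.
Variable R : realType.
Variables (C : nat -> nat -> set R) (k : nat -> nat) (m : nat).
Hypothesis mC : forall n i, measurable (C n i).
Hypothesis k_inj : injective k.
Hypothesis k_ge : forall n, (m <= k n)%N.

Definition null_sides i := \bigcup_(n in [set n | lam (C n i) = 0]) C n i.

Definition chosen_side i :=
  \bigcup_(n in [set n | k n = i /\ lam (C n i) < +oo]) C n i.

Definition forbidden i := null_sides i `|` chosen_side i.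

Lemma measurable_null_sides i : measurable (null_sides i).
Proof. by apply: bigcup_measurable => n _; exact: mC. Qed.

Lemma lam_null_sides i : lam (null_sides i) = 0.
Proof. by apply: measure_bigcup_null => [n _|n Cn]; [exact: mC | exact: Cn]. Qed.

Lemma chosen_side_cases i :
  chosen_side i = set0 \/ exists n, lam (C n i) < +oo /\ chosen_side i = C n i.
Proof.
rewrite /chosen_side.
have [[n [kn Cn]]|none] := pselect (exists n, k n = i /\ lam (C n i) < +oo).
  right; exists n; split=> //.
  suff -> : [set n | k n = i /\ lam (C n i) < +oo] = [set n] by rewrite bigcup_set1.
  apply/seteqP; split=> [n' [kn' _]|_ ->] //=.
  by apply: k_inj; rewrite kn kn'.
left; suff -> : [set n | k n = i /\ lam (C n i) < +oo] = set0 by rewrite bigcup_set0.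
by apply/seteqP; split=> // n' Cn'; apply: none; exists n'.
Qed.

Lemma chosen_side_small i : (i < m)%N -> chosen_side i = set0.
Proof.
move=> im; apply/seteqP; split=> // y [n [kn _] _].
by move: (k_ge n); rewrite kn leqNgt im.
Qed.

Lemma measurable_chosen_side i : measurable (chosen_side i).
Proof. by case: (chosen_side_cases i) => [->|[n [_ ->]]]. Qed.

Lemma measurable_forbidden i : measurable (forbidden i).
Proof.
by apply: measurableU; [exact: measurable_null_sides | exact: measurable_chosen_side].
Qed.

Lemma lam_forbidden i : lam (forbidden i) = lam (chosen_side i).
Proof.
rewrite /forbidden setUC /lam measureU0 //.
- exact: measurable_chosen_side.
- exact: measurable_null_sides.
- exact: lam_null_sides.
Qed.

Lemma lam_forbidden_lty i : lam (forbidden i) < +oo.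
Proof.
rewrite lam_forbidden; have [->|[n [Cn ->]]] := chosen_side_cases i => //.
by rewrite /lam measure0.
Qed.

Lemma lam_forbidden_small i : (i < m)%N -> lam (forbidden i) = 0.
Proof. by move=> im; rewrite lam_forbidden chosen_side_small // /lam measure0. Qed.

Lemma exists_allowed_point (x0 : nat -> R) (e : R) : (0 < e)%R ->
  exists2 x : nat -> R, (forall i, (i < m)%N -> `|x i - x0 i| < e)%R &
    forall i, ~ forbidden i (x i).
Proof.
move=> e_gt0.
pose T i := if (i < m)%N then [set` `](x0 i - e)%R, (x0 i + e)%R[] else [set: R].
have /choice[x xP] i : exists y, T i y /\ ~ forbidden i y.
  suff [y [Ty Fy]] : T i `\` forbidden i !=set0 by exists y.
  apply: (@measure_lt_setD_neq0 _ _ _ lebesgue_measure (forbidden i) (T i)).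
  - exact: measurable_forbidden.
  - by rewrite /T; case: ifP.
  - change (lam (forbidden i) < lam (T i)).
    rewrite /T; case: ifPn => im; last by rewrite lamT lam_forbidden_lty.
    rewrite lam_forbidden_small // /lam lebesgue_measure_itv /= lte_fin ifT.
      by rewrite -EFinD lte_fin; lra.
    by lra.
exists x => [i im|i]; last exact: (xP i).2.
have := (xP i).1; rewrite /T im /= in_itv /= => /andP[? ?].
by rewrite ltr_norml; apply/andP; split; lra.
Qed.

Lemma rect_meets_forbidden n x :
  (exists j, lam (C n j) = 0) \/ lam (C n (k n)) < +oo ->
  rect (C n) x -> exists i, forbidden i (x i).
Proof.
case=> [[j Cj]|Ck] Cx; first by exists j; left; exists n.
by exists (k n); right; exists n.
Qed.

End forbidden_values.

Lemma finite_rects_avoid_cylinder (R : realType) (C : nat -> nat -> set R)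
    (x0 : nat -> R) (m : nat) (e : R) :
  (0 < e)%R -> (forall n, finite_rect (C n)) ->
  exists2 x : nat -> R, (forall i, (i < m)%N -> `|x i - x0 i| < e)%R &
    forall n, ~ rect (C n) x.
Proof.
move=> e_gt0 C_fin.
have mC n i : measurable (C n i) by case: (C_fin n).
pose P n i := (exists j, lam (C n j) = 0) \/ lam (C n i) < +oo.
have [n b|k [k_incr k_ge kP]] := @increasing_choice P m.
  have [C_null|C_fin_unbounded] := finite_rect_null_or_finite (C_fin n).
    by exists b => //; left.
  by have [i bi Ci] := C_fin_unbounded b; exists i => //; right.
have k_inj : injective k := incn_inj (leq_mono k_incr).
have [x x_near x_allowed] := exists_allowed_point mC k_inj k_ge x0 e_gt0.
exists x => // n /(@rect_meets_forbidden _ C k n x (kP n)) [i].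
exact: x_allowed.
Qed.

Lemma ptws_nbhs_cylinder (R : realType) (x0 : nat -> R) (U : set {ptws nat -> R}) :
  nbhs (x0 : {ptws nat -> R}) U ->
  exists m : nat, forall x : nat -> R,
    (forall i, (i < m)%N -> `|x i - x0 i| < m.+1%:R^-1)%R -> U x.
Proof.
move=> Ux0; apply: contrapT => /forallNP no_cylinder.
have /choice[X XP] m : exists x : nat -> R,
    (forall i, (i < m)%N -> `|x i - x0 i| < m.+1%:R^-1)%R /\ ~ U x.
  by have /existsNP[x /not_implyP] := no_cylinder m; exists x.
have X_cvg : X @ \oo --> (x0 : {ptws nat -> R}).
  apply/pointwise_cvgP => i.
  suff : X m i @[m --> \oo] --> x0 i by [].
  apply/cvgrPdist_lt => e e_gt0.
  near=> m.
  have im : (i < m)%N by near: m; exists i.+1.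
  rewrite distrC; apply: lt_trans ((XP m).1 i im) _.
  by near: m; exact: (near_infty_natSinv_lt (PosNum e_gt0)).
have [m _ mU] := X_cvg U Ux0.
exact: (XP m).2 (mU m (leqnn m)).
Unshelve. all: by end_near.
Qed.

Theorem theoremA7 (R : realType) (U : set {ptws nat -> R}) :
  open U -> U !=set0 -> mu (U : set (nat -> R)) = +oo.
Proof.
move=> oU [x0 Ux0].
have [m near_U] := ptws_nbhs_cylinder (open_nbhs_nbhs (conj oU Ux0)).
rewrite /mu /mu_star; set covers := (X in ereal_inf X).
suff -> : covers = set0 by rewrite ereal_inf0.
apply/seteqP; split=> // s [C [C_fin [C_cover _]]].
have m_gt0 : (0 < m.+1%:R^-1 :> R)%R by rewrite invr_gt0 ltr0n.
have [x x_near x_uncovered] := finite_rects_avoid_cylinder x0 m m_gt0 C_fin.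
have [n _ Cx] := C_cover x (near_U x x_near).
exact: x_uncovered n Cx.
Qed.
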